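(* Let $U\in\mathbb{R}^{n\times d}$, let $\mathbf{x}_*\in\mathbb{R}^d$ be $s$-sparse, $\mathbf{e}\in\mathbb{R}^n$ and $\mathbf{y}=U\mathbf{x}_*+\mathbf{e}$. Let $\mathbf{x}_t$ be an iterate of Algorithm 1 with support $\mathcal{S}_t$, and $\mathcal{S}_*$ the support of $\mathbf{x}_*$. If $|\mathcal{S}_t\setminus\mathcal{S}_*|\le s$, $\|\mathbf{x}_t-\mathbf{x}_*\|_2\le\Delta_t$ and $\lambda_t=\|U^\top\mathbf{e}\|_\infty+\frac{\delta_s+\sqrt2\theta_{s,s}}{\sqrt s}\Delta_t$, then \[ \|\mathbf{x}_{t+1}-\mathbf{x}_*\|_2\le(\delta_s+\sqrt2\theta_{s,s}+\delta_{3s})\Delta_t+(1+\sqrt2)\sqrt s\|U^\top\mathbf{e}\|_\infty . \]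
   Context: $U_{\mathcal T}$ is the column submatrix of $U$ indexed by $\mathcal T$. $\delta_k$ is the smallest constant $\ge0$ with $(1-\delta_k)\|\mathbf{v}\|_2^2\le\|U_{\mathcal T}\mathbf{v}\|_2^2\le(1+\delta_k)\|\mathbf{v}\|_2^2$ for all $|\mathcal T|\le k$, $\mathbf{v}\in\mathbb{R}^{|\mathcal T|}$; $\theta_{s,s}$ (with $2s\le d$) is the smallest constant with $|\langle U_{\mathcal T}\mathbf{v},U_{\mathcal T'}\mathbf{v}'\rangle|\le\theta_{s,s}\|\mathbf{v}\|_2\|\mathbf{v}'\|_2$ for all disjoint $\mathcal T,\mathcal T'$ of size at most $s$. Algorithm 1: $\mathbf{x}_1=0$ and $\mathbf{x}_{t+1}=\mathrm{sign}(\widehat{\mathbf{x}}_t)[|\widehat{\mathbf{x}}_t|-\lambda_t]_+$ with $\widehat{\mathbf{x}}_t=\mathbf{x}_t-U^\top(U\mathbf{x}_t-\mathbf{y})$ (componentwise), for parameters $\lambda_t>0$. *)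

From HB Require Import structures.
From mathcomp Require Import all_boot all_order all_algebra.
From mathcomp Require Import boolp classical_sets reals.
Set Implicit Arguments. Unset Strict Implicit. Unset Printing Implicit Defensive.
Import Order.TTheory GRing.Theory Num.Theory.
Local Open Scope ring_scope.
Local Open Scope classical_set_scope.

Section Defs.
Variable R : realType.

Definition sqnorm m (v : 'cV[R]_m) : R := \sum_i (v i 0) ^+ 2.
Definition norm2 m (v : 'cV[R]_m) : R := Num.sqrt (sqnorm v).
Definition dotp m (a b : 'cV[R]_m) : R := \sum_i a i 0 * b i 0.
Definition norminf m (v : 'cV[R]_m) : R := \big[Num.max/0]_i `|v i 0|.

Definition supp d (x : 'cV[R]_d) : {set 'I_d} := [set i | x i 0 != 0].

(* column submatrix U_T, columns of T taken in increasing order *)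
Definition colT n d (U : 'M[R]_(n, d)) (T : {set 'I_d}) : 'M[R]_(n, #|T|) :=
  colsub (@enum_val _ (pred_of_set T)) U.

Definition rip_delta n d (U : 'M[R]_(n, d)) (k : nat) : R :=
  inf [set c : R | 0 <= c /\
    forall (T : {set 'I_d}), (#|T| <= k)%N -> forall v : 'cV[R]_#|T|,
      (1 - c) * sqnorm v <= sqnorm (colT U T *m v) <= (1 + c) * sqnorm v].

Definition rip_theta n d (U : 'M[R]_(n, d)) (s : nat) : R :=
  inf [set c : R | 0 <= c /\
    forall (T T' : {set 'I_d}), [disjoint (pred_of_set T) & (pred_of_set T')] ->
      (#|T| <= s)%N -> (#|T'| <= s)%N ->
      forall (v : 'cV[R]_#|T|) (v' : 'cV[R]_#|T'|),
        `|dotp (colT U T *m v) (colT U T' *m v')| <= c * norm2 v * norm2 v'].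

Definition ista_step n d (U : 'M[R]_(n, d)) (y : 'cV[R]_n) (lam : R)
    (x : 'cV[R]_d) : 'cV[R]_d :=
  let xh := x - U^T *m (U *m x - y) in
  \col_i (Num.sg (xh i 0) * Num.max (`|xh i 0| - lam) 0).

(* iterates of Algorithm 1: ista U y lam 1 = x_1 = 0,
   ista U y lam t.+1 = x_{t+1} = step with lam t from x_t (t >= 1);
   index 0 is unused and also set to 0 *)
Fixpoint ista n d (U : 'M[R]_(n, d)) (y : 'cV[R]_n) (lam : nat -> R)
    (t : nat) : 'cV[R]_d :=
  match t with
  | 0 => 0
  | t'.+1 => if t' is 0 then 0 else ista_step U y (lam t') (ista U y lam t')
  end.

End Defs.

From mathcomp Require Import boolp classical_sets reals.
From mathcomp Require Import all_boot all_order all_algebra.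
From mathcomp Require Import ring lra.
Import Order.TTheory GRing.Theory Num.Theory.
Local Open Scope ring_scope.
Set Implicit Arguments. Unset Strict Implicit. Unset Printing Implicit Defensive.

(* Write h = x_t - x_*, r = h - U^T U h and w = r + U^T e, so that the
   gradient step lands at x_* + w and x_{t+1} = soft(x_* + w).  Soft
   thresholding moves each entry by at most lam_t and zeroes the entries off
   S_* with |w_i| <= lam_t, so |x_{t+1} - x_*| is bounded entrywise by |w| on
   S_* u J plus lam_t on S_*, where J is the set of indices off S_* with
   |w_i| > lam_t.  The choice of lam_t forces |J| <= s: otherwise some s indices
   of J carry a part of r of norm > (delta_s + sqrt2 theta_s) |h|, while
   splitting h into its parts on these indices, on S_* and on the rest of S_t
   and applying the RIP to each bounds that part of r by exactly this quantity.
   On S_* u J, of size <= 2s, r then has norm <= delta_3s |h|, U^T e has norm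
   <= sqrt(2s) |U^T e|_oo, and lam_t contributes sqrt(s) lam_t. *)

Section RealInequalities.
Variable R : realType.

Lemma ler_of_sqr_le_mul (a b : R) : 0 <= b -> a ^+ 2 <= a * b -> a <= b.
Proof.
move=> b0 ab; have [a_le0|a_gt0] := lerP a 0; first exact: le_trans a_le0 b0.
by rewrite -(ler_pM2l a_gt0) -expr2.
Qed.

Lemma addr_le_sqrt2 (a b c : R) : 0 <= a -> 0 <= b -> 0 <= c ->
  a ^+ 2 + b ^+ 2 <= c ^+ 2 -> a + b <= Num.sqrt 2 * c.
Proof.
move=> a0 b0 c0 abc; rewrite -ler_sqr ?nnegrE ?addr_ge0 ?mulr_ge0 ?sqrtr_ge0 //.
rewrite exprMn sqr_sqrtr ?ler0n //; have := sqr_ge0 (a - b); nra.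
Qed.

Lemma ler_add_mul_inf (S : set R) (a b k : R) :
  (S !=set0)%classic -> 0 <= k ->
  (forall c, S c -> a <= b + c * k) -> a <= b + inf S * k.
Proof.
move=> S0 k0 Sab; apply/ler_addgt0Pr => e e0.
have k1 : 0 < k + 1 by lra.
set f := e / (k + 1).
have fk : f * k <= e by rewrite /f mulrAC ler_pdivrMr //; nra.
have [c Sc c_lt] : exists2 c, S c & c < inf S + f.
  by apply: inf_lt => //; rewrite ltrDl divr_gt0.
have : c * k <= (inf S + f) * k by rewrite ler_wpM2r // ltW.
have := Sab c Sc; lra.
Qed.

End RealInequalities.

Section Euclidean.
Variable R : realType.
Implicit Types (m : nat).

Lemma sqnorm_ge0 m (v : 'cV[R]_m) : 0 <= sqnorm v.
Proof. by apply: sumr_ge0 => i _; exact: sqr_ge0. Qed.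

Lemma norm2_ge0 m (v : 'cV[R]_m) : 0 <= norm2 v.
Proof. exact: sqrtr_ge0. Qed.

Lemma norm2_sqr m (v : 'cV[R]_m) : norm2 v ^+ 2 = sqnorm v.
Proof. by rewrite sqr_sqrtr // sqnorm_ge0. Qed.

Lemma norm2_eq0 m (v : 'cV[R]_m) : norm2 v = 0 -> v = 0.
Proof.
move=> /eqP; rewrite sqrtr_eq0 => v_le0; apply/matrixP => i j; rewrite (ord1 j) mxE.
apply/eqP; rewrite -sqrf_eq0; apply/eqP.
have v0 : sqnorm v = 0 by apply/eqP; rewrite eq_le v_le0 sqnorm_ge0.
by apply: (psumr_eq0P _ v0) => // k _; exact: sqr_ge0.
Qed.

Lemma norm2_gt0 m (v : 'cV[R]_m) : v != 0 -> 0 < norm2 v.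
Proof. by move=> v0; rewrite lt_def norm2_ge0 andbT; apply: contra_neq v0 => /norm2_eq0. Qed.

Lemma sqnormE m (v : 'cV[R]_m) : sqnorm v = dotp v v.
Proof. by apply: eq_bigr => i _; rewrite expr2. Qed.

Lemma sqnormZ m a (v : 'cV[R]_m) : sqnorm (a *: v) = a ^+ 2 * sqnorm v.
Proof. by rewrite /sqnorm mulr_sumr; apply: eq_bigr => i _; rewrite mxE exprMn. Qed.

Lemma dotpC m (a b : 'cV[R]_m) : dotp a b = dotp b a.
Proof. by apply: eq_bigr => i _; rewrite mulrC. Qed.

Lemma dotp0l m (b : 'cV[R]_m) : dotp 0 b = 0.
Proof. by apply: big1 => i _; rewrite mxE mul0r. Qed.

Lemma dotp0r m (a : 'cV[R]_m) : dotp a 0 = 0.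
Proof. by rewrite dotpC dotp0l. Qed.

Lemma dotpDr m (a b c : 'cV[R]_m) : dotp a (b + c) = dotp a b + dotp a c.
Proof. by rewrite /dotp -big_split; apply: eq_bigr => i _; rewrite mxE mulrDr. Qed.

Lemma dotpBr m (a b c : 'cV[R]_m) : dotp a (b - c) = dotp a b - dotp a c.
Proof.
by rewrite /dotp -sumrB; apply: eq_bigr => i _; rewrite !mxE mulrBr.
Qed.

Lemma dotpZr m k (a b : 'cV[R]_m) : dotp a (k *: b) = k * dotp a b.
Proof. by rewrite /dotp mulr_sumr; apply: eq_bigr => i _; rewrite mxE mulrCA. Qed.

Lemma dotpDl m (a b c : 'cV[R]_m) : dotp (a + b) c = dotp a c + dotp b c.
Proof. by rewrite dotpC dotpDr !(dotpC c). Qed.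

Lemma dotpBl m (a b c : 'cV[R]_m) : dotp (a - b) c = dotp a c - dotp b c.
Proof. by rewrite dotpC dotpBr !(dotpC c). Qed.

Lemma dotpZl m k (a b : 'cV[R]_m) : dotp (k *: a) b = k * dotp a b.
Proof. by rewrite dotpC dotpZr dotpC. Qed.

Lemma dotp_mulmx m p (M : 'M[R]_(m, p)) a b :
  dotp a (M *m b) = dotp (M^T *m a) b.
Proof.
rewrite /dotp; under eq_bigr do rewrite mxE mulr_sumr.
under [RHS]eq_bigr do rewrite mxE mulr_suml.
rewrite exchange_big /=; apply: eq_bigr => j _; apply: eq_bigr => i _.
by rewrite mxE; ring.
Qed.

Lemma cauchy_schwarz m (a b : 'cV[R]_m) : dotp a b ^+ 2 <= sqnorm a * sqnorm b.
Proof.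
have [b0|b_neq0] := eqVneq b 0; first by rewrite b0 dotp0r expr0n mulr_ge0 ?sqnorm_ge0.
have B_gt0 : 0 < sqnorm b by rewrite -norm2_sqr exprn_gt0 ?norm2_gt0.
set A := sqnorm a; set B := sqnorm b; set D := dotp a b.
have : 0 <= \sum_i (B * a i 0 - D * b i 0) ^+ 2 by apply: sumr_ge0 => i _; exact: sqr_ge0.
have -> : \sum_i (B * a i 0 - D * b i 0) ^+ 2 = B * (B * A - D ^+ 2).
  transitivity (\sum_i (B ^+ 2 * a i 0 ^+ 2 - (2 * B * D) * (a i 0 * b i 0)
                        + D ^+ 2 * b i 0 ^+ 2)); first by apply: eq_bigr => i _; ring.
  rewrite !big_split /= sumrN -!mulr_sumr -[\sum_i a i 0 ^+ 2]/A.
  by rewrite -[\sum_i b i 0 ^+ 2]/B (_ : \sum_i a i 0 * b i 0 = D) //; clearbody A B D; ring.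
by rewrite pmulr_rge0 // subr_ge0 mulrC.
Qed.

Lemma ler_dotp m (a b : 'cV[R]_m) : `|dotp a b| <= norm2 a * norm2 b.
Proof.
rewrite -ler_sqr ?nnegrE ?mulr_ge0 ?norm2_ge0 //.
by rewrite real_normK ?num_real // exprMn !norm2_sqr cauchy_schwarz.
Qed.

Lemma ler_norm2D m (a b : 'cV[R]_m) : norm2 (a + b) <= norm2 a + norm2 b.
Proof.
rewrite -ler_sqr ?nnegrE ?addr_ge0 ?norm2_ge0 //.
rewrite norm2_sqr sqnormE dotpDl !dotpDr (dotpC b a) -!sqnormE -!norm2_sqr.
have := le_trans (ler_norm _) (ler_dotp a b); nra.
Qed.

Lemma norm2_le_entrywise m (a b : 'cV[R]_m) :
  (forall i, `|a i 0| <= `|b i 0|) -> norm2 a <= norm2 b.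
Proof.
move=> ab; rewrite ler_wsqrtr // /sqnorm; apply: ler_sum => i _.
by rewrite -(real_normK (num_real (a i 0))) -(real_normK (num_real (b i 0))) ler_sqr ?nnegrE.
Qed.

Lemma norm2_le_add_entrywise m (a b c : 'cV[R]_m) :
  (forall i, `|a i 0| <= `|b i 0| + `|c i 0|) -> norm2 a <= norm2 b + norm2 c.
Proof.
move=> abc; set b' := \col_i `|b i 0|; set c' := \col_i `|c i 0|.
have [bb' cc'] : norm2 b' <= norm2 b /\ norm2 c' <= norm2 c.
  by split; apply: norm2_le_entrywise => i; rewrite mxE normr_id.
apply: le_trans (lerD bb' cc'); apply: le_trans (ler_norm2D b' c').
apply: norm2_le_entrywise => i; rewrite !mxE [X in _ <= X]ger0_norm ?addr_ge0 //; exact: abc.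
Qed.

Lemma le_norminf m (v : 'cV[R]_m) i : `|v i 0| <= norminf v.
Proof. exact: (le_bigmax_cond _ (fun j => `|v j 0|)). Qed.

Lemma norminf_ge0 m (v : 'cV[R]_m) : 0 <= norminf v.
Proof. exact: bigmax_ge_id. Qed.

End Euclidean.

Lemma exists_subset_card (T : finType) (A : {set T}) k :
  (k <= #|A|)%N -> exists2 B : {set T}, B \subset A & #|B| = k.
Proof.
case/card_geqP => s [s_uniq s_size s_sub]; exists [set i in s].
  by apply/subsetP => i; rewrite inE => /s_sub.
by rewrite cardsE; move/card_uniqP: s_uniq => ->.
Qed.

Section Masks.
Variables (R : realType) (d : nat).
Implicit Types (A B T : {set 'I_d}) (x y : 'cV[R]_d).

Definition maskv A x : 'cV[R]_d := \col_i (if i \in A then x i 0 else 0).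

Lemma supp_subsetP T x :
  reflect (forall i, i \notin T -> x i 0 = 0) (supp x \subset T).
Proof.
apply: (iffP subsetP) => [sub i iT | x0 i]; last first.
  by rewrite inE; apply: contraR => /x0 ->.
by apply/eqP; apply: contraNT iT => xi; apply: sub; rewrite inE.
Qed.

Lemma supp_maskv A x : supp (maskv A x) \subset A.
Proof. by apply/supp_subsetP => i iA; rewrite mxE (negbTE iA). Qed.

Lemma supp_subsetD T x y :
  supp x \subset T -> supp y \subset T -> supp (x + y) \subset T.
Proof.
move=> /supp_subsetP xT /supp_subsetP yT; apply/supp_subsetP => i iT.
by rewrite mxE xT ?yT ?addr0.
Qed.

Lemma supp_subsetZ T a x : supp x \subset T -> supp (a *: x) \subset T.
Proof.
by move=> /supp_subsetP xT; apply/supp_subsetP => i iT; rewrite mxE xT ?mulr0.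
Qed.

Lemma maskvD A x y : maskv A (x + y) = maskv A x + maskv A y.
Proof. by apply/matrixP => i j; rewrite !mxE; case: ifP; rewrite ?addr0. Qed.

Lemma sqnorm_maskv A x : sqnorm (maskv A x) = dotp (maskv A x) x.
Proof. by rewrite sqnormE; apply: eq_bigr => i _; rewrite !mxE; case: ifP; rewrite ?mul0r. Qed.

Lemma dotp_maskv_disjoint A B x y :
  [disjoint A & B] -> dotp (maskv A x) (maskv B y) = 0.
Proof.
move=> AB; apply: big1 => i _; rewrite !mxE.
by case: ifP => [iA|_]; rewrite ?(disjointFr AB iA) ?mulr0 ?mul0r.
Qed.

Lemma maskv_partition A B x : [disjoint A & B] ->
  x = maskv A x + maskv B x + maskv (~: (A :|: B)) x.
Proof.
move=> AB; apply/matrixP => i j; rewrite (ord1 j) !mxE !inE.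
by case: (boolP (i \in A)) => [iA|_]; rewrite ?(disjointFr AB iA);
  case: (i \in B); rewrite /= ?addr0 ?add0r.
Qed.

Lemma sqnorm_partition A B x : [disjoint A & B] ->
  sqnorm x = sqnorm (maskv A x) + sqnorm (maskv B x) + sqnorm (maskv (~: (A :|: B)) x).
Proof.
move=> AB; rewrite /sqnorm -!big_split; apply: eq_bigr => i _; rewrite !mxE !inE.
by case: (boolP (i \in A)) => [iA|_]; rewrite ?(disjointFr AB iA);
  case: (i \in B); rewrite /= expr0n ?addr0 ?add0r.
Qed.

Lemma norm2_maskv_le A x c : 0 <= c -> (forall i, `|x i 0| <= c) ->
  norm2 (maskv A x) <= Num.sqrt #|A|%:R * c.
Proof.
move=> c0 xc; rewrite -[c in X in _ <= X]ger0_norm // -sqrtr_sqr -sqrtrM ?ler0n //.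
apply: ler_wsqrtr; rewrite /sqnorm mulr_natl -sumr_const [X in _ <= X]big_mkcond /=.
apply: ler_sum => i _; rewrite mxE; case: ifP => _; last by rewrite expr0n.
by rewrite -(real_normK (num_real (x i 0))) lerXn2r ?nnegrE.
Qed.

Lemma sqnorm_maskv_gt A x k : 0 <= k -> (0 < #|A|)%N ->
  (forall i, i \in A -> k < `|x i 0|) -> k ^+ 2 *+ #|A| < sqnorm (maskv A x).
Proof.
move=> k0 /card_gt0P [i0 i0A] xk.
rewrite -sumr_const /sqnorm [X in _ < X](bigID (mem A)) /= [X in _ + X]big1; last first.
  by move=> i /negbTE iA; rewrite mxE iA expr0n.
rewrite addr0; apply: ltr_sum => [|i iA].
  by apply/hasP; exists i0; rewrite ?mem_index_enum.
rewrite mxE iA -(real_normK (num_real (x i 0))) ltrXn2r ?nnegrE //; exact: xk.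
Qed.

End Masks.


Section RestrictedIsometry.
Variables (R : realType) (n d : nat) (U : 'M[R]_(n, d)).
Implicit Types (T : {set 'I_d}) (x : 'cV[R]_d).

Definition subvec T x : 'cV[R]_#|T| := \col_j x (enum_val j) 0.

Lemma sum_supp_subset T x (F : 'I_d -> R) : supp x \subset T ->
  (forall i, x i 0 = 0 -> F i = 0) -> \sum_i F i = \sum_(j < #|T|) F (enum_val j).
Proof.
move=> /supp_subsetP xT F0; rewrite (bigID (mem T)) /= [X in _ + X]big1 ?addr0.
  by rewrite big_enum_val.
by move=> i /xT /F0.
Qed.

Lemma colT_mul_subvec T x : supp x \subset T -> colT U T *m subvec T x = U *m x.
Proof.
move=> xT; apply/matrixP => i j; rewrite (ord1 j) !mxE.
rewrite (sum_supp_subset (F := fun k => U i k * x k 0) xT); last by move=> k ->; rewrite mulr0.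
by apply: eq_bigr => k _; rewrite !mxE.
Qed.

Lemma sqnorm_subvec T x : supp x \subset T -> sqnorm (subvec T x) = sqnorm x.
Proof.
move=> xT; rewrite /sqnorm (sum_supp_subset (F := fun k => x k 0 ^+ 2) xT).
  by apply: eq_bigr => k _; rewrite !mxE.
by move=> k ->; rewrite expr0n.
Qed.

Definition frob : R := \sum_i \sum_j U i j ^+ 2.

Lemma sqnorm_colT_mul_le T (v : 'cV[R]_#|T|) : sqnorm (colT U T *m v) <= frob * sqnorm v.
Proof.
rewrite /sqnorm /frob mulr_suml; apply: ler_sum => i _.
have rowT : \sum_j colT U T i j ^+ 2 <= \sum_j U i j ^+ 2.
  rewrite [X in X <= _](_ : _ = \sum_(l in T) U i l ^+ 2); last first.
    by rewrite [RHS]big_enum_val; apply: eq_bigr => j _; rewrite mxE.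
  by rewrite [X in _ <= X](bigID (mem T)) /= lerDl sumr_ge0 // => l _; exact: sqr_ge0.
apply: le_trans _ (ler_wpM2r (sqnorm_ge0 v) rowT); set a := \col_j colT U T i j.
have -> : (colT U T *m v) i 0 = dotp a v.
  by rewrite mxE /dotp; apply: eq_bigr => j _; rewrite !mxE.
have -> : \sum_j colT U T i j ^+ 2 = sqnorm a by apply: eq_bigr => j _; rewrite !mxE.
exact: cauchy_schwarz.
Qed.

Lemma frob_ge0 : 0 <= frob.
Proof. by apply: sumr_ge0 => i _; apply: sumr_ge0 => j _; exact: sqr_ge0. Qed.

Lemma sqnorm_colT_mul_frob_bounds T (v : 'cV[R]_#|T|) :
  (1 - (1 + frob)) * sqnorm v <= sqnorm (colT U T *m v) <= (1 + (1 + frob)) * sqnorm v.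
Proof.
have Uv := sqnorm_colT_mul_le v; have v0 := sqnorm_ge0 v.
have Uv0 := sqnorm_ge0 (colT U T *m v); have f0 := frob_ge0.
by apply/andP; split; nra.
Qed.

Lemma dotp_colT_mul_le_frob T T' (v : 'cV[R]_#|T|) (v' : 'cV[R]_#|T'|) :
  `|dotp (colT U T *m v) (colT U T' *m v')| <= frob * norm2 v * norm2 v'.
Proof.
have norm2_colT T2 (w : 'cV[R]_#|T2|) : norm2 (colT U T2 *m w) <= Num.sqrt frob * norm2 w.
  by rewrite /norm2 -sqrtrM ?frob_ge0 // ler_wsqrtr // sqnorm_colT_mul_le.
apply: le_trans (ler_dotp _ _) _.
have -> : frob * norm2 v * norm2 v' = (Num.sqrt frob * norm2 v) * (Num.sqrt frob * norm2 v').
  by rewrite mulrACA -expr2 sqr_sqrtr ?frob_ge0 // mulrA.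
by apply: ler_pM; rewrite ?mulr_ge0 ?sqrtr_ge0 ?norm2_ge0 ?norm2_colT.
Qed.

Lemma rip_delta_ge0 k : 0 <= rip_delta U k.
Proof.
apply: lb_le_inf => [|c []//]; exists (1 + frob); split; first by have := frob_ge0; lra.
by move=> T _; exact: sqnorm_colT_mul_frob_bounds.
Qed.

Lemma rip_theta_ge0 s : 0 <= rip_theta U s.
Proof.
apply: lb_le_inf => [|c []//]; exists frob; split; first exact: frob_ge0.
by move=> T T' _ _ _; exact: dotp_colT_mul_le_frob.
Qed.

Lemma rip_delta_sqnorm k T x : (#|T| <= k)%N -> supp x \subset T ->
  (1 - rip_delta U k) * sqnorm x <= sqnorm (U *m x)
  <= (1 + rip_delta U k) * sqnorm x.
Proof.
move=> Tk xT; rewrite /rip_delta; set S := (X in inf X).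
have S0 : (S !=set0)%classic.
  exists (1 + frob); split; first by have := frob_ge0; lra.
  by move=> T' _; exact: sqnorm_colT_mul_frob_bounds.
have SxU c : S c -> (1 - c) * sqnorm x <= sqnorm (U *m x) <= (1 + c) * sqnorm x.
  by case=> _ /(_ T Tk (subvec T x)); rewrite colT_mul_subvec // sqnorm_subvec.
have x0 := sqnorm_ge0 x; apply/andP; split.
  have : sqnorm x <= sqnorm (U *m x) + inf S * sqnorm x.
    by apply: ler_add_mul_inf => // c /SxU /andP[+ _]; lra.
  lra.
have : sqnorm (U *m x) <= sqnorm x + inf S * sqnorm x.
  by apply: ler_add_mul_inf => // c /SxU /andP[_]; lra.
lra.
Qed.

Lemma rip_theta_dotp s T T' x x' : [disjoint T & T'] ->
  (#|T| <= s)%N -> (#|T'| <= s)%N -> supp x \subset T -> supp x' \subset T' ->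
  `|dotp (U *m x) (U *m x')| <= rip_theta U s * norm2 x * norm2 x'.
Proof.
move=> TT' Ts T's xT x'T'; rewrite /rip_theta; set S := (X in inf X).
have S0 : (S !=set0)%classic.
  exists frob; split; first exact: frob_ge0.
  by move=> T1 T1' _ _ _; exact: dotp_colT_mul_le_frob.
have TT'c : [disjoint (pred_of_set T) & (pred_of_set T')]%classic.
  apply/disj_set2P/seteqP; split => // i [iT iT'].
  by move: (disjointFr TT' iT) => /negP; apply.
rewrite -mulrA -[inf S * _]add0r; apply: ler_add_mul_inf; rewrite ?mulr_ge0 ?norm2_ge0 //.
move=> c [_ /(_ T T' TT'c Ts T's (subvec T x) (subvec T' x'))].
by rewrite !colT_mul_subvec // /norm2 !sqnorm_subvec // add0r mulrA.
Qed.

Lemma rip_delta_dotp_sqnorm k T g h : (#|T| <= k)%N ->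
  supp g \subset T -> supp h \subset T ->
  2 * `|dotp g h - dotp (U *m g) (U *m h)| <= rip_delta U k * (sqnorm g + sqnorm h).
Proof.
move=> Tk gT hT.
have /andP[p1 p2] := rip_delta_sqnorm Tk (supp_subsetD gT hT).
have /andP[m1 m2] := rip_delta_sqnorm Tk (supp_subsetD gT (supp_subsetZ (-1) hT)).
move: p1 p2 m1 m2; rewrite !scaleN1r mulmxBr mulmxDr !sqnormE.
rewrite !dotpBl !dotpBr !dotpDl !dotpDr (dotpC h g) (dotpC (U *m h) (U *m g)) -!sqnormE.
move=> p1 p2 m1 m2; rewrite -[2]ger0_norm // -normrM mulrBr ler_norml; apply/andP; split; lra.
Qed.

Lemma rip_delta_dotp k T g h : (#|T| <= k)%N ->
  supp g \subset T -> supp h \subset T ->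
  `|dotp g h - dotp (U *m g) (U *m h)| <= rip_delta U k * norm2 g * norm2 h.
Proof.
move=> Tk gT hT; have d0 := rip_delta_ge0 k.
have [->|g0] := eqVneq g 0.
  by rewrite mulmx0 !dotp0l subrr normr0 !mulr_ge0 ?norm2_ge0.
have [->|h0] := eqVneq h 0.
  by rewrite mulmx0 !dotp0r subrr normr0 !mulr_ge0 ?norm2_ge0.
(* [norm2 h *: g] and [norm2 g *: h] have equal norms, so the AM-GM bound
   becomes a product bound. *)
have := rip_delta_dotp_sqnorm Tk (supp_subsetZ (norm2 h) gT) (supp_subsetZ (norm2 g) hT).
rewrite -!scalemxAr !dotpZl !dotpZr !sqnormZ -!norm2_sqr -!mulrBr !normrM.
rewrite (ger0_norm (norm2_ge0 g)) (ger0_norm (norm2_ge0 h)).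
have := norm2_gt0 g0; have := norm2_gt0 h0.
set a := norm2 g; set b := norm2 h; set X := `|dotp g h - _|; move=> b_gt0 a_gt0 H.
by rewrite -(ler_pM2l (mulr_gt0 a_gt0 b_gt0)); nra.
Qed.

End RestrictedIsometry.

Section Residual.
Variables (R : realType) (n d : nat) (U : 'M[R]_(n, d)) (h : 'cV[R]_d).
Implicit Types (A J S D T : {set 'I_d}).
Let r := h - U^T *m (U *m h).

Lemma sqnorm_maskv_residual A :
  sqnorm (maskv A r) = dotp (maskv A r) h - dotp (U *m maskv A r) (U *m h).
Proof. by rewrite sqnorm_maskv /r dotpBr dotp_mulmx trmxK. Qed.

Lemma norm2_maskv_residual k A T : A \subset T -> supp h \subset T -> (#|T| <= k)%N ->
  norm2 (maskv A r) <= rip_delta U k * norm2 h.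
Proof.
move=> AT hT Tk; have gT := subset_trans (supp_maskv A r) AT.
apply: ler_of_sqr_le_mul; first by rewrite mulr_ge0 ?rip_delta_ge0 ?norm2_ge0.
rewrite norm2_sqr sqnorm_maskv_residual mulrCA mulrA.
exact: le_trans (ler_norm _) (rip_delta_dotp U Tk gT hT).
Qed.

Lemma norm2_maskv_residual_disjoint s J S D : [disjoint J & S] ->
  supp h \subset S :|: D -> (#|J| <= s)%N -> (#|S| <= s)%N -> (#|D| <= s)%N ->
  norm2 (maskv J r) <= (rip_delta U s + Num.sqrt 2 * rip_theta U s) * norm2 h.
Proof.
move=> JS hSD Js Ss Ds; set g := maskv J r; set D' := D :\: (J :|: S).
set h1 := maskv J h; set h2 := maskv S h; set h3 := maskv (~: (J :|: S)) h.
have JC : [disjoint J & ~: (J :|: S)] by apply/pred0P => i; rewrite /= !inE; case: (i \in J).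
have JD' : [disjoint J & D'] by apply/pred0P => i; rewrite /= !inE; case: (i \in J).
have h3D' : supp h3 \subset D'.
  apply/supp_subsetP => i; rewrite !inE mxE !inE negb_and negbK.
  case/orP => [->//|iD]; case: ifP => // /norP[_ iS].
  by move/supp_subsetP: hSD; apply; rewrite !inE negb_or iS.
have D's : (#|D'| <= s)%N := leq_trans (subset_leq_card (subsetDl D _)) Ds.
have gJ := supp_maskv J r.
have /ler_normlP[_ P1] := rip_delta_dotp U Js gJ (supp_maskv J h).
have /ler_normlP[P2 _] := rip_theta_dotp U JS Js Ss gJ (supp_maskv S h).
have /ler_normlP[P3 _] := rip_theta_dotp U JD' Js D's gJ h3D'.
have g_le : norm2 g <= rip_delta U s * norm2 h1 + rip_theta U s * (norm2 h2 + norm2 h3).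
  apply: ler_of_sqr_le_mul.
    by rewrite addr_ge0 ?mulr_ge0 ?addr_ge0 ?rip_delta_ge0 ?rip_theta_ge0 ?norm2_ge0.
  rewrite norm2_sqr sqnorm_maskv_residual {1 2}(maskv_partition h JS) !mulmxDr !dotpDr.
  rewrite (dotp_maskv_disjoint _ _ JS) (dotp_maskv_disjoint _ _ JC).
  by rewrite !addr0; lra.
have hE : norm2 h1 ^+ 2 + (norm2 h2 ^+ 2 + norm2 h3 ^+ 2) = norm2 h ^+ 2.
  by rewrite !norm2_sqr (sqnorm_partition h JS) addrA.
have h1_le : norm2 h1 <= norm2 h.
  rewrite -ler_sqr ?nnegrE ?norm2_ge0 // -hE lerDl.
  by rewrite addr_ge0 ?sqr_ge0.
have h23_le : norm2 h2 + norm2 h3 <= Num.sqrt 2 * norm2 h.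
  by apply: addr_le_sqrt2; rewrite ?norm2_ge0 // -hE lerDr sqr_ge0.
apply: le_trans g_le _; rewrite mulrDl (mulrC (Num.sqrt 2)) -mulrA.
by apply: lerD; apply: ler_wpM2l; rewrite ?rip_delta_ge0 ?rip_theta_ge0.
Qed.

Lemma card_residual_gt_le s S D J (k : R) : (0 < s)%N ->
  [disjoint J & S] -> supp h \subset S :|: D -> (#|S| <= s)%N -> (#|D| <= s)%N ->
  0 <= k -> (rip_delta U s + Num.sqrt 2 * rip_theta U s) * norm2 h <= Num.sqrt s%:R * k ->
  (forall i, i \in J -> k < `|r i 0|) -> (#|J| <= s)%N.
Proof.
move=> s_gt0 JS hSD Ss Ds k0 hk rk; rewrite leqNgt; apply/negP.
move=> /ltnW /exists_subset_card [J' J'J J's].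
have J'S : [disjoint J' & S] := disjointWl J'J JS.
have g_le := le_trans (norm2_maskv_residual_disjoint J'S hSD (eq_leq J's) Ss Ds) hk.
have := @sqnorm_maskv_gt R d J' r k k0; rewrite J's => /(_ s_gt0).
move=> /(_ (fun i iJ' => rk i (subsetP J'J i iJ'))); apply/negP; rewrite -leNgt -norm2_sqr.
have -> : k ^+ 2 *+ s = (Num.sqrt s%:R * k) ^+ 2.
  by rewrite exprMn sqr_sqrtr ?ler0n // mulr_natl.
by rewrite ler_sqr ?nnegrE ?norm2_ge0 ?mulr_ge0 ?sqrtr_ge0.
Qed.

End Residual.

Section SoftThreshold.
Variable R : realType.
Implicit Types (lam a : R).

Definition soft lam a := Num.sg a * Num.max (`|a| - lam) 0.

Lemma soft_sub_le lam a : 0 <= lam -> `|soft lam a - a| <= lam.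
Proof.
move=> lam0; rewrite /soft maxEle.
case: (ltrgt0P a) => [a_gt0|a_lt0|->]; last by rewrite sgr0 mul0r subrr normr0.
  rewrite (gtr0_sg a_gt0) mul1r ler_norml.
  by case: ifP => cmp; apply/andP; split; lra.
rewrite (ltr0_sg a_lt0) mulN1r ler_norml.
by case: ifP => cmp; apply/andP; split; lra.
Qed.

Lemma soft_le lam a : 0 <= lam -> `|soft lam a| <= `|a|.
Proof.
rewrite /soft normrM => lam0; apply: le_trans (ler_piMl _ _) _ => //.
  by case: (sgrP a); rewrite ?normr0 ?normr1 ?normrN1.
by rewrite ger0_norm ?le_max ?lexx ?orbT // ge_max normr_ge0 gerBl lam0.
Qed.

Lemma soft_eq0 lam a : `|a| <= lam -> soft lam a = 0.
Proof. by move=> a_le; rewrite /soft max_r ?mulr0 // subr_le0. Qed.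

Lemma soft_shift_sub_le lam a w : 0 <= lam ->
  `|soft lam (a + w) - a|
    <= (if (a != 0) || (lam < `|w|) then `|w| else 0) + (if a != 0 then lam else 0).
Proof.
move=> lam0; have [->|a0] /= := eqVneq a 0.
  rewrite add0r subr0 addr0; case: ltP => [_|w_le]; first exact: soft_le.
  by rewrite soft_eq0 ?normr0.
have -> : soft lam (a + w) - a = (soft lam (a + w) - (a + w)) + w.
  by rewrite opprD addrA subrK.
apply: le_trans (ler_normD _ _) _.
by rewrite addrC lerD2l soft_sub_le.
Qed.

Lemma ista_stepE n d (U : 'M[R]_(n, d)) y lam x :
  ista_step U y lam x = \col_i soft lam ((x - U^T *m (U *m x - y)) i 0).
Proof. by []. Qed.

Lemma soft_shift_sub_entry d (a w : 'cV[R]_d) lam i : 0 <= lam ->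
  `|(\col_j soft lam ((a + w) j 0) - a) i 0|
    <= `|maskv (supp a :|: [set j | lam < `|w j 0|]) w i 0|
       + `|maskv (supp a) (const_mx lam) i 0|.
Proof.
move=> lam0; rewrite !mxE !inE; apply: le_trans (soft_shift_sub_le _ _ lam0) _.
by case: ifP => _; case: ifP => _; rewrite ?normr0 ?normr_id ?(ger0_norm lam0).
Qed.

End SoftThreshold.

Section OneStep.
Variables (R : realType) (n d s : nat) (U : 'M[R]_(n, d)).
Variables (xs x : 'cV[R]_d) (e : 'cV[R]_n) (lam Delta : R).
Let K := rip_delta U s + Num.sqrt 2 * rip_theta U s.
Let h := x - xs.
Let r := h - U^T *m (U *m h).
Let z := U^T *m e.
Let J := [set i | lam < `|(r + z) i 0|] :\: supp xs.
Hypotheses (s_gt0 : (0 < s)%N) (card_xs : (#|supp xs| <= s)%N)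
  (card_x : (#|supp x :\: supp xs| <= s)%N) (h_le : norm2 h <= Delta)
  (lamE : lam = norminf z + K / Num.sqrt s%:R * Delta).

Lemma ista_step_gradient : x - U^T *m (U *m x - (U *m xs + e)) = xs + (r + z).
Proof.
have -> : U *m x - (U *m xs + e) = U *m h - e by rewrite mulmxBr opprD addrA.
rewrite mulmxBr -/z /r /h; move: (U^T *m _) => V.
by apply/matrixP => i j; rewrite !mxE; ring.
Qed.

Lemma supp_err_subset : supp h \subset supp xs :|: (supp x :\: supp xs).
Proof.
apply/supp_subsetP => i; rewrite !inE negb_or negb_and !negbK => /andP[/eqP xs0].
by rewrite xs0 eqxx /= => /eqP x0; rewrite /h !mxE x0 xs0 subrr.
Qed.

Lemma Delta_ge0 : 0 <= Delta.
Proof. exact: le_trans (norm2_ge0 h) h_le. Qed.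

Lemma K_ge0 : 0 <= K.
Proof. by rewrite addr_ge0 ?mulr_ge0 ?sqrtr_ge0 ?rip_delta_ge0 ?rip_theta_ge0. Qed.

Lemma lam_ge0 : 0 <= lam.
Proof.
rewrite lamE addr_ge0 ?norminf_ge0 // mulr_ge0 ?Delta_ge0 // divr_ge0 ?K_ge0 //.
exact: sqrtr_ge0.
Qed.

Lemma sqrt_mul_threshold : Num.sqrt s%:R * (K / Num.sqrt s%:R * Delta) = K * Delta.
Proof.
have s_gt0' : 0 < Num.sqrt s%:R :> R by rewrite sqrtr_gt0 ltr0n.
by rewrite mulrA mulrCA divff ?gt_eqF // mulr1.
Qed.

Lemma card_J : (#|J| <= s)%N.
Proof.
apply: (card_residual_gt_le (U := U) (k := K / Num.sqrt s%:R * Delta) s_gt0 _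
  supp_err_subset card_xs card_x).
- by apply/pred0P => i; rewrite /= !inE andbAC andNb.
- by rewrite mulr_ge0 ?divr_ge0 ?K_ge0 ?Delta_ge0 ?sqrtr_ge0.
- by rewrite sqrt_mul_threshold ler_wpM2l ?K_ge0.
move=> i; rewrite !inE => /andP[_]; rewrite [(r + z) i 0]mxE lamE.
have := ler_normD (r i 0) (z i 0); have := le_norminf z i; lra.
Qed.

Lemma ista_step_err :
  norm2 (ista_step U (U *m xs + e) lam x - xs)
    <= (K + rip_delta U (3 * s)) * Delta + (1 + Num.sqrt 2) * Num.sqrt s%:R * norminf z.
Proof.
have lam0 := lam_ge0.
rewrite ista_stepE ista_step_gradient.
apply: le_trans (norm2_le_add_entrywise (fun i => soft_shift_sub_entry xs (r + z) i lam0)) _.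
have -> : supp xs :|: [set i | lam < `|(r + z) i 0|] = supp xs :|: J.
  by apply/setP => i; rewrite !inE; case: (xs i 0 != 0).
set A := supp xs :|: J.
have r_le : norm2 (maskv A r) <= rip_delta U (3 * s) * Delta.
  apply: le_trans (ler_wpM2l (rip_delta_ge0 U _) h_le).
  apply: (norm2_maskv_residual U (T := supp xs :|: (supp x :\: supp xs) :|: J)).
  - by apply/subsetP => i; rewrite /A !inE; case/orP => ->; rewrite ?orbT.
  - exact: subset_trans supp_err_subset (subsetUl _ _).
  - rewrite mulSn mul2n -addnn; apply: leq_trans (leq_card_setU _ _).1 _.
    by rewrite addnC leq_add ?card_J //; apply: leq_trans (leq_card_setU _ _).1 (leq_add _ _).
have z_le : norm2 (maskv A z) <= Num.sqrt 2 * Num.sqrt s%:R * norminf z.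
  apply: le_trans (norm2_maskv_le _ (norminf_ge0 z) (le_norminf z)) _.
  rewrite -sqrtrM ?ler0n // -natrM ler_wpM2r ?norminf_ge0 // ler_wsqrtr // ler_nat.
  by rewrite mul2n -addnn; apply: leq_trans (leq_card_setU _ _).1 (leq_add _ card_J).
have lam_le :
    norm2 (maskv (supp xs) (const_mx lam)) <= Num.sqrt s%:R * norminf z + K * Delta.
  apply: le_trans (norm2_maskv_le _ lam0 _) _ => [i|]; first by rewrite mxE ger0_norm.
  apply: le_trans (ler_wpM2r lam0 (ler_wsqrtr (_ : #|supp xs|%:R <= s%:R))) _.
    by rewrite ler_nat.
  by rewrite lamE mulrDr sqrt_mul_threshold.
have := ler_norm2D (maskv A r) (maskv A z); rewrite -maskvD; lra.
Qed.

End OneStep.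

Unset Implicit Arguments.

Theorem proposition3 (R : realType) (n d s : nat) (U : 'M[R]_(n, d))
    (xs : 'cV[R]_d) (e : 'cV[R]_n) (y : 'cV[R]_n) (lam : nat -> R)
    (t : nat) (Delta : R) :
  (0 < s)%N -> (2 * s <= d)%N ->
  (#|supp xs| <= s)%N ->
  y = U *m xs + e ->
  (forall k, (1 <= k)%N -> 0 < lam k) ->
  (1 <= t)%N ->
  (#|supp (ista U y lam t) :\: supp xs| <= s)%N ->
  norm2 (ista U y lam t - xs) <= Delta ->
  lam t = norminf (U^T *m e)
          + (rip_delta U s + Num.sqrt 2 * rip_theta U s)
              / Num.sqrt (s%:R) * Delta ->
  norm2 (ista U y lam t.+1 - xs)
    <= (rip_delta U s + Num.sqrt 2 * rip_theta U s + rip_delta U (3 * s))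
         * Delta
       + (1 + Num.sqrt 2) * Num.sqrt (s%:R) * norminf (U^T *m e).
Proof.
move=> s_gt0 _ card_xs -> _ t_ge1 card_x err_le lamE.
have -> : ista U (U *m xs + e) lam t.+1
          = ista_step U (U *m xs + e) (lam t) (ista U (U *m xs + e) lam t).
  by case: t t_ge1 {card_x err_le lamE}.
exact: ista_step_err.
Qed.
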